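(* There exist a constant $c>0$ and a sequence $(\Phi_n(x))_{n\ge0}$ of existential Presburger formulas with one free variable, of size $O(n^2)$, such that for all sufficiently large $n$, every quantifier-free Presburger formula $\varphi_n$ equivalent to $\Phi_n$ satisfies $|\varphi_n|\ge 2^{cn}$ (sizes measured with constants in binary).
   Context: Presburger arithmetic is the first-order theory of $\langle\mathbb{Z};+,<,(\equiv_m)_m,0,1\rangle$ with atoms $\sum a_ix_i\le b$ and $\sum a_ix_i\equiv b\pmod m$. Quantifier-free formulas are Boolean combinations of atoms; existential formulas are $\exists\bm{u}\colon\chi$ with $\chi$ quantifier-free. The size $|\varphi|$ is the number of symbols to write $\varphi$ with constants in binary. Two formulas are equivalent if they define the same subset of $\mathbb{Z}$. *)

From Stdlib Require Import ZArith List Reals.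
Import ListNotations.

(* A linear term sum_i a_i * x_{v_i}, as a list of (coefficient, variable index). *)
Definition lterm := list (Z * nat).

Inductive atom : Type :=
| ALe  : lterm -> Z -> atom
| ACong : lterm -> Z -> Z -> atom.  (* ACong t b m : t == b (mod m) *)

Inductive qf : Type :=
| QAtom : atom -> qf
| QNot  : qf -> qf
| QAnd  : qf -> qf -> qf
| QOr   : qf -> qf -> qf.

(* Existential formula  exists u_1 .. u_k, chi  ; variable 0 is the free
   variable x and variables 1..k are the quantified ones. *)
Record exformula : Type := Ex { ex_nvars : nat; ex_body : qf }.

Definition eval_term (e : nat -> Z) (t : lterm) : Z :=
  fold_right (fun p acc => (fst p * e (snd p) + acc)%Z) 0%Z t.

Definition atom_holds (e : nat -> Z) (a : atom) : Prop :=
  match a with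
  | ALe t b => (eval_term e t <= b)%Z
  | ACong t b m => (m | eval_term e t - b)%Z
  end.

Fixpoint qf_holds (e : nat -> Z) (f : qf) : Prop :=
  match f with
  | QAtom a => atom_holds e a
  | QNot f => ~ qf_holds e f
  | QAnd f g => qf_holds e f /\ qf_holds e g
  | QOr f g => qf_holds e f \/ qf_holds e g
  end.

Definition qf_set (f : qf) (z : Z) : Prop := qf_holds (fun _ => z) f.

Definition ex_set (F : exformula) (z : Z) : Prop :=
  exists u : nat -> Z,
    qf_holds (fun i => match i with O => z | S j => u j end) (ex_body F).

Definition atom_vars (a : atom) : list nat :=
  match a with ALe t _ => map snd t | ACong t _ _ => map snd t end.

Definition atom_wf (a : atom) : Prop :=
  match a with ALe _ _ => True | ACong _ _ m => (0 < m)%Z end.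

Fixpoint qf_vars (f : qf) : list nat :=
  match f with
  | QAtom a => atom_vars a
  | QNot f => qf_vars f
  | QAnd f g | QOr f g => qf_vars f ++ qf_vars g
  end.

Fixpoint qf_wf (f : qf) : Prop :=
  match f with
  | QAtom a => atom_wf a
  | QNot f => qf_wf f
  | QAnd f g | QOr f g => qf_wf f /\ qf_wf g
  end.

Definition qf_one_var (f : qf) : Prop :=
  qf_wf f /\ forall v, In v (qf_vars f) -> v = 0%nat.

Definition ex_one_var (F : exformula) : Prop :=
  qf_wf (ex_body F) /\ forall v, In v (qf_vars (ex_body F)) -> (v <= ex_nvars F)%nat.

(* binary length of an integer constant, plus one symbol for the sign *)
Definition zbits (a : Z) : nat := S (Z.to_nat (Z.log2 (Z.abs a)) + 1).

Definition term_size (t : lterm) : nat :=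
  fold_right (fun p acc => (zbits (fst p) + 1 + 1 + acc)%nat) 1%nat t.

Definition atom_size (a : atom) : nat :=
  match a with
  | ALe t b => (term_size t + 1 + zbits b)%nat
  | ACong t b m => (term_size t + 1 + zbits b + zbits m)%nat
  end.

Fixpoint qf_size (f : qf) : nat :=
  match f with
  | QAtom a => atom_size a
  | QNot f => S (qf_size f)
  | QAnd f g | QOr f g => S (qf_size f + qf_size g)
  end.

Definition ex_size (F : exformula) : nat := (1 + ex_nvars F + qf_size (ex_body F))%nat.

From Stdlib Require Import ZArith List Reals Lia Lra.
From mathcomp Require Import binomial zify.
Import ListNotations.
Open Scope Z_scope.

(* Phi_n(x) says x = 2^n y + sum_(m < n) 2^m b_m with every digit b_m in {0, y}, i.e. x is a
   multiple of some k in the window [2^n, 2^(n+1)); its n coefficients 2^m have O(n) binary digits.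
   A quantifier-free formula in one variable of size s defines a set that is periodic beyond 2^s
   with some period M <= 2^s: an atom a x <= b is constant for x > |b| and a congruence modulo m
   has period m.  If that set is the set of multiples of window elements, every window element k
   divides M: otherwise d = gcd(k, M) < 2^n, and a large multiple of k congruent to d modulo M
   would lie in the set although it is congruent to d modulo every window element.  So M is a
   multiple of lcm(N+1, ..., 2N+1) with N = 2^n - 1, hence of (N+1) C(2N+1, N+1) >= 2^N, and
   s >= 2^n - 1. *)

(** * Eventual periodicity of quantifier-free sets *)

Definition coef_sum (t : lterm) : Z := fold_right (fun p acc => fst p + acc) 0 t.

Lemma eval_term_const z t : eval_term (fun _ => z) t = coef_sum t * z.
Proof.
  unfold eval_term. induction t as [|[a v] t IH]; cbn; [lia|].
  rewrite IH. unfold coef_sum. lia.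
Qed.

Lemma abs_lt_pow2_zbits a : Z.abs a < 2 ^ Z.of_nat (zbits a).
Proof.
  unfold zbits. destruct (Z.eq_dec a 0) as [->|Ha]; [cbn; lia|].
  assert (Hlog := Z.log2_spec (Z.abs a) ltac:(lia)).
  assert (Hlog0 := Z.log2_nonneg (Z.abs a)).
  replace (Z.of_nat _) with (Z.succ (Z.log2 (Z.abs a)) + 1) by lia.
  rewrite Z.pow_add_r by lia. lia.
Qed.

Definition eventually_periodic (P : Z -> Prop) (T M : Z) : Prop :=
  forall z w, T < z -> T < w -> (M | z - w) -> (P z <-> P w).

Definition pow2_periodic (P : Z -> Prop) (s : nat) : Prop :=
  exists M, 1 <= M <= 2 ^ Z.of_nat s /\ eventually_periodic P (2 ^ Z.of_nat s) M.

Lemma pow2_le_mono (a b : nat) : (a <= b)%nat -> 2 ^ Z.of_nat a <= 2 ^ Z.of_nat b.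
Proof. intro. apply Z.pow_le_mono_r; lia. Qed.

Lemma pow2_periodic_mono P s s' : (s <= s')%nat -> pow2_periodic P s -> pow2_periodic P s'.
Proof.
  intros Hs [M [HM HP]]. assert (H := pow2_le_mono _ _ Hs).
  exists M. split; [lia|]. intros z w Hz Hw. apply HP; lia.
Qed.

Lemma pow2_periodic_not P s : pow2_periodic P s -> pow2_periodic (fun z => ~ P z) s.
Proof. intros [M [HM HP]]. exists M. split; [lia|]. intros z w Hz Hw Hd. now rewrite (HP z w). Qed.

Lemma pow2_periodic_binop (op : Prop -> Prop -> Prop) P Q s1 s2 :
  (forall A A' B B', (A <-> A') -> (B <-> B') -> (op A B <-> op A' B')) ->
  pow2_periodic P s1 -> pow2_periodic Q s2 ->
  pow2_periodic (fun z => op (P z) (Q z)) (S (s1 + s2)).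
Proof.
  intros Hop [M1 [HM1 HP]] [M2 [HM2 HQ]].
  assert (H1 := pow2_le_mono s1 (S (s1 + s2)) ltac:(lia)).
  assert (H2 := pow2_le_mono s2 (S (s1 + s2)) ltac:(lia)).
  assert (H12 : 2 ^ Z.of_nat s1 * 2 ^ Z.of_nat s2 <= 2 ^ Z.of_nat (S (s1 + s2))).
  { rewrite <- Z.pow_add_r by lia. apply Z.pow_le_mono_r; lia. }
  exists (M1 * M2). split; [nia|]. intros z w Hz Hw Hd. apply Hop.
  - apply HP; [lia | lia | exact (Z.divide_trans _ _ _ (Z.divide_factor_l _ _) Hd)].
  - apply HQ; [lia | lia | exact (Z.divide_trans _ _ _ (Z.divide_factor_r _ _) Hd)].
Qed.

Lemma mul_le_eventually_const c b z w :
  Z.abs b < z -> Z.abs b < w -> (c * z <= b <-> c * w <= b).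
Proof.
  intros Hz Hw. destruct (Z.lt_total c 0) as [Hc|[->|Hc]]; [|lia|]; split; intro; nia.
Qed.

Lemma atom_pow2_periodic a :
  atom_wf a -> pow2_periodic (fun z => atom_holds (fun _ => z) a) (atom_size a).
Proof.
  destruct a as [t b | t b m]; cbn; intro Hwf.
  - assert (Hb := abs_lt_pow2_zbits b).
    assert (Hle := pow2_le_mono (zbits b) (term_size t + 1 + zbits b) ltac:(lia)).
    exists 1. split; [lia|]. intros z w Hz Hw _. rewrite !eval_term_const.
    apply mul_le_eventually_const; lia.
  - assert (Hm := abs_lt_pow2_zbits m).
    assert (Hle := pow2_le_mono (zbits m) (term_size t + 1 + zbits b + zbits m) ltac:(lia)).
    exists m. split; [lia|]. intros z w _ _ [q Hq]. rewrite !eval_term_const.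
    replace (coef_sum t * z - b) with (coef_sum t * w - b + (coef_sum t * q) * m) by nia.
    split; intro H.
    + replace (coef_sum t * w - b)
        with (coef_sum t * w - b + (coef_sum t * q) * m - (coef_sum t * q) * m) by ring.
      apply Z.divide_sub_r; [exact H | apply Z.divide_factor_r].
    + apply Z.divide_add_r; [exact H | apply Z.divide_factor_r].
Qed.

Lemma qf_set_pow2_periodic f : qf_wf f -> pow2_periodic (qf_set f) (qf_size f).
Proof.
  unfold qf_set. induction f as [a | f IH | f IHf g IHg | f IHf g IHg]; cbn; intro Hwf.
  - exact (atom_pow2_periodic a Hwf).
  - apply (pow2_periodic_mono _ (qf_size f)); [lia|]. exact (pow2_periodic_not _ _ (IH Hwf)).
  - destruct Hwf. apply pow2_periodic_binop; [tauto | apply IHf | apply IHg]; assumption.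
  - destruct Hwf. apply pow2_periodic_binop; [tauto | apply IHf | apply IHg]; assumption.
Qed.

(** * The formulas [Phi_n] *)

Definition lneg (t : lterm) : lterm := map (fun p => (- fst p, snd p)) t.

Definition QEq0 (t : lterm) : qf := QAnd (QAtom (ALe t 0)) (QAtom (ALe (lneg t) 0)).

Lemma eval_lneg e t : eval_term e (lneg t) = - eval_term e t.
Proof. unfold eval_term, lneg. induction t as [|p t IH]; cbn in *; lia. Qed.

Lemma QEq0_holds e t : qf_holds e (QEq0 t) <-> eval_term e t = 0.
Proof. cbn. rewrite eval_lneg. lia. Qed.

(* Variable 0 is x, variable 1 is y and variable [2 + m] is the digit b_m. *)
Fixpoint digit_term (n : nat) : lterm :=
  match n with
  | O => []
  | S m => (2 ^ Z.of_nat m, (2 + m)%nat) :: digit_term m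
  end.

Definition window_term (n : nat) : lterm :=
  (-1, 0%nat) :: (2 ^ Z.of_nat n, 1%nat) :: digit_term n.

Fixpoint digit_constraints (n : nat) : qf :=
  match n with
  | O => QAtom (ALe [] 0)
  | S m => QAnd (QOr (QEq0 [(1, (2 + m)%nat)]) (QEq0 [(1, (2 + m)%nat); (-1, 1%nat)]))
                (digit_constraints m)
  end.

Definition window_formula (n : nat) : exformula :=
  Ex (S n) (QAnd (QEq0 (window_term n)) (digit_constraints n)).

Fixpoint binary_sum (g : nat -> Z) (n : nat) : Z :=
  match n with
  | O => 0
  | S m => binary_sum g m + 2 ^ Z.of_nat m * g m
  end.

Lemma eval_digit_term e n : eval_term e (digit_term n) = binary_sum (fun m => e (2 + m)%nat) n.
Proof.
  unfold eval_term. induction n as [|n IH]; cbn [digit_term fold_right binary_sum fst snd].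
  - reflexivity.
  - rewrite IH. ring.
Qed.

Lemma eval_window_term e n :
  eval_term e (window_term n) =
  2 ^ Z.of_nat n * e 1%nat + binary_sum (fun m => e (2 + m)%nat) n - e 0%nat.
Proof. rewrite <- eval_digit_term. unfold eval_term. cbn [window_term fold_right fst snd]. ring. Qed.

Lemma digit_constraints_holds e n :
  qf_holds e (digit_constraints n) <->
  forall m, (m < n)%nat -> e (2 + m)%nat = 0 \/ e (2 + m)%nat = e 1%nat.
Proof.
  induction n as [|n IH]; cbn [digit_constraints qf_holds].
  - cbn. split; intros; lia.
  - rewrite IH, !QEq0_holds. unfold eval_term. cbn [fold_right fst snd]. split.
    + intros [Hn Hlt] m Hm. destruct (Nat.eq_dec m n) as [->|]; [lia | apply Hlt; lia].
    + intros H. split; [specialize (H n ltac:(lia)); lia | intros; apply H; lia].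
Qed.

Lemma binary_sum_of_digits g y n :
  (forall m, (m < n)%nat -> g m = 0 \/ g m = y) ->
  exists s, 0 <= s < 2 ^ Z.of_nat n /\ binary_sum g n = s * y.
Proof.
  induction n as [|n IH]; intros Hg; cbn [binary_sum].
  - exists 0. cbn. lia.
  - destruct IH as [s [Hs ->]]; [intros; apply Hg; lia|].
    rewrite Nat2Z.inj_succ, Z.pow_succ_r by lia.
    destruct (Hg n ltac:(lia)) as [-> | ->].
    + exists s. lia.
    + exists (s + 2 ^ Z.of_nat n). split; [lia | ring].
Qed.

Lemma mod_pow2_succ s n : 0 <= n ->
  s mod 2 ^ Z.succ n = s mod 2 ^ n + 2 ^ n * ((s / 2 ^ n) mod 2).
Proof.
  intros Hn. assert (0 < 2 ^ n) by (apply Z.pow_pos_nonneg; lia).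
  rewrite Z.pow_succ_r, (Z.mul_comm 2) by lia. apply Z.rem_mul_r; lia.
Qed.

Lemma binary_sum_binary_digits s y n :
  binary_sum (fun m => (s / 2 ^ Z.of_nat m) mod 2 * y) n = s mod 2 ^ Z.of_nat n * y.
Proof.
  induction n as [|n IH]; cbn [binary_sum].
  - rewrite Z.mod_1_r. ring.
  - rewrite IH, Nat2Z.inj_succ, mod_pow2_succ by lia. ring.
Qed.

Definition window_multiple (n : nat) (z : Z) : Prop :=
  exists k y, 2 ^ Z.of_nat n <= k < 2 * 2 ^ Z.of_nat n /\ z = k * y.

Lemma window_formula_set n z : ex_set (window_formula n) z <-> window_multiple n z.
Proof.
  unfold ex_set, window_multiple. cbn [window_formula ex_body qf_holds].
  setoid_rewrite QEq0_holds. setoid_rewrite eval_window_term.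
  setoid_rewrite digit_constraints_holds. cbn [Nat.add]. split.
  - intros [u [Hx Hdig]].
    destruct (binary_sum_of_digits _ _ n Hdig) as [s [Hs Hsum]].
    exists (2 ^ Z.of_nat n + s), (u 0%nat). split; lia.
  - intros [k [y [Hk ->]]].
    set (s := k - 2 ^ Z.of_nat n).
    exists (fun j => match j with O => y | S m => (s / 2 ^ Z.of_nat m) mod 2 * y end). split.
    + rewrite binary_sum_binary_digits, Z.mod_small by lia. unfold s. ring.
    + intros m _. assert (Hbit := Z.mod_pos_bound (s / 2 ^ Z.of_nat m) 2 ltac:(lia)).
      destruct (Z.eq_dec ((s / 2 ^ Z.of_nat m) mod 2) 0) as [->|Hb]; [left; ring | right].
      replace ((s / 2 ^ Z.of_nat m) mod 2) with 1 by lia. ring.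
Qed.

Lemma zbits_opp a : zbits (- a) = zbits a.
Proof. unfold zbits. now rewrite Z.abs_opp. Qed.

Lemma zbits_pow2 m : zbits (2 ^ Z.of_nat m) = (m + 2)%nat.
Proof.
  unfold zbits. rewrite Z.abs_eq by (apply Z.pow_nonneg; lia).
  rewrite Z.log2_pow2, Nat2Z.id by lia. lia.
Qed.

Lemma term_size_lneg t : term_size (lneg t) = term_size t.
Proof.
  unfold term_size, lneg.
  induction t as [|p t IH]; cbn [map fold_right fst]; [|rewrite zbits_opp]; lia.
Qed.

Lemma qf_size_QEq0 t : qf_size (QEq0 t) = (2 * term_size t + 7)%nat.
Proof.
  cbn [QEq0 qf_size atom_size]. rewrite term_size_lneg. change (zbits 0) with 2%nat. lia.
Qed.

Lemma term_size_digit_term n : (term_size (digit_term n) <= n * (n + 4) + 1)%nat.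
Proof.
  unfold term_size. induction n as [|n IH]; cbn [digit_term fold_right fst]; [lia|].
  rewrite zbits_pow2. lia.
Qed.

Lemma qf_size_digit_constraints n : qf_size (digit_constraints n) = (44 * n + 4)%nat.
Proof.
  induction n as [|n IH]; [reflexivity|].
  cbn [digit_constraints qf_size]. rewrite !qf_size_QEq0, IH. cbn [term_size fold_right fst].
  change (zbits 1) with 2%nat; change (zbits (-1)) with 2%nat. lia.
Qed.

Lemma ex_size_window_formula n :
  (1 <= n)%nat -> (ex_size (window_formula n) <= 100 * n * n)%nat.
Proof.
  intros Hn. unfold ex_size, window_formula. cbn [ex_nvars ex_body qf_size].
  rewrite qf_size_QEq0, qf_size_digit_constraints.
  assert (Hd := term_size_digit_term n).
  unfold window_term, term_size in *. cbn [fold_right fst]. rewrite zbits_pow2.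
  change (zbits (-1)) with 2%nat. nia.
Qed.

Lemma qf_vars_QEq0 t : qf_vars (QEq0 t) = map snd t ++ map snd t.
Proof. cbn. unfold lneg. rewrite map_map. reflexivity. Qed.

Lemma digit_term_vars n v : In v (map snd (digit_term n)) -> (2 <= v <= S n)%nat.
Proof. induction n as [|n IH]; cbn; [tauto|]. intros [<- | H]; [lia | specialize (IH H); lia]. Qed.

Lemma digit_constraints_vars n v : In v (qf_vars (digit_constraints n)) -> (v <= S n)%nat.
Proof.
  induction n as [|n IH]; cbn [digit_constraints qf_vars]; [cbn; tauto|].
  rewrite !qf_vars_QEq0, !in_app_iff. cbn.
  intros [[H | H] | H]; [lia | lia | specialize (IH H); lia].
Qed.

Lemma window_formula_one_var n : ex_one_var (window_formula n).
Proof.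
  split; cbn [window_formula ex_body ex_nvars].
  - split; [cbn; tauto|]. induction n; cbn; tauto.
  - cbn [qf_vars]. rewrite qf_vars_QEq0. unfold window_term. cbn [map fst snd].
    intros v H. rewrite !in_app_iff in H. cbn [In] in H.
    destruct H as [[H | H] | H]; [| | apply digit_constraints_vars in H; lia];
      (destruct H as [<- | [<- | H]]; [lia | lia | apply digit_term_vars in H; lia]).
Qed.

(** * Every window element divides the period *)

Lemma Z_divide_fact N i : (1 <= i <= N)%nat -> (Z.of_nat i | Z.of_nat (fact N)).
Proof.
  induction N as [|N IH]; intros Hi; [lia|].
  cbn [fact]. rewrite Nat2Z.inj_mul.
  destruct (Nat.eq_dec i (S N)) as [->|Hne].
  - apply Z.divide_factor_l.
  - apply Z.divide_mul_r, IH. lia.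
Qed.

Lemma window_divides_period n T M :
  1 <= M -> 0 <= T -> eventually_periodic (window_multiple n) T M ->
  forall k, 2 ^ Z.of_nat n <= k < 2 * 2 ^ Z.of_nat n -> (k | M).
Proof.
  intros HM HT HP k Hk. set (a := 2 ^ Z.of_nat n) in *.
  assert (Ha : 1 <= a) by (unfold a; assert (H := Z.pow_pos_nonneg 2 (Z.of_nat n)); lia).
  set (g := Z.gcd k M).
  assert (HgM : (g | M)) by apply Z.gcd_divide_r.
  assert (Hg : 0 < g).
  { assert (H := Z.gcd_nonneg k M). assert (g <> 0) by (intro H0; apply Z.gcd_eq_0 in H0; lia). lia. }
  destruct (Z.gcd_divide_l k M) as [q Hq]; fold g in Hq.
  destruct (Z.eq_dec q 1) as [->|Hq1]; [rewrite Hq, Z.mul_1_l; exact HgM|].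
  exfalso.
  assert (Hga : g < a) by nia.
  destruct (Z.gcd_bezout k M g eq_refl) as [u [v Huv]].
  (* [y0] is congruent to [g] modulo every window element, since they all divide [F]. *)
  set (F := Z.of_nat (fact (Z.to_nat (2 * a)))).
  assert (HF : 1 <= F) by (unfold F; assert (H := lt_O_fact (Z.to_nat (2 * a))); lia).
  set (y0 := g + M * (F * (T + 1))).
  set (r := Z.abs u + T + 1).
  set (x0 := k * (u + M * r)).
  assert (Hx0 : window_multiple n x0) by (exists k, (u + M * r); split; [exact Hk | reflexivity]).
  assert (Hd : (M | x0 - y0)).
  { exists (k * r - v - F * (T + 1)). unfold x0, y0. rewrite <- Huv. ring. }
  assert (Hr : T + 1 <= u + M * r) by (unfold r; nia).
  apply (HP x0 y0 ltac:(unfold x0; nia) ltac:(unfold y0; nia) Hd) in Hx0.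
  destruct Hx0 as [k' [y [Hk' Hy]]].
  assert (Hk'F : (k' | F)).
  { unfold F. replace k' with (Z.of_nat (Z.to_nat k')) by lia. apply Z_divide_fact. lia. }
  assert (Hk'g : (k' | g)).
  { replace g with (y0 - M * (F * (T + 1))) by (unfold y0; ring). apply Z.divide_sub_r.
    - rewrite Hy. apply Z.divide_factor_l.
    - apply Z.divide_mul_r, Z.divide_mul_l, Hk'F. }
  apply Z.divide_pos_le in Hk'g; lia.
Qed.

Lemma divide_of_reciprocal_diff A B D M :
  0 < A -> 0 < B -> D * (B - A) = A * B -> (A | M) -> (B | M) -> (D | M).
Proof.
  intros HA HB HD [a Ha] [b Hb]. exists (a - b).
  apply (Z.mul_reg_r _ _ (A * B)); [lia|].
  replace ((a - b) * D * (A * B)) with ((a * A) * (D * B) - (b * B) * (D * A)) by ring.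
  rewrite <- Ha, <- Hb. rewrite <- HD. ring.
Qed.

(* 1 / ((k+1) C(n+1, k+1)) = 1 / (k C(n, k)) - 1 / (k C(n+1, k)) *)
Lemma binomial_reciprocal_diff n k : (k <= S n)%nat ->
  let A := Z.of_nat (k * 'C(n, k)) in
  let B := Z.of_nat (k * 'C(S n, k)) in
  Z.of_nat (S k * 'C(S n, S k)) * (B - A) = A * B.
Proof.
  intros Hk A B. unfold A, B.
  assert (E1 : Z.of_nat (S k * 'C(S n, S k)) = Z.of_nat (S n) * Z.of_nat 'C(n, k)).
  { assert (H := mul_bin_diag (S n) k). cbn [Nat.pred] in H. lia. }
  assert (E2 : Z.of_nat (S k * 'C(S n, S k)) = (Z.of_nat (S n) - Z.of_nat k) * Z.of_nat 'C(S n, k)).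
  { assert (H := mul_bin_left (S n) k). nia. }
  set (D := Z.of_nat (S k * 'C(S n, S k))) in *. rewrite !Nat2Z.inj_mul.
  transitivity (Z.of_nat k * (D * Z.of_nat 'C(S n, k) - D * Z.of_nat 'C(n, k))); [ring|].
  rewrite E1 at 1. rewrite E2. ring.
Qed.

Lemma mul_binomial_divide k n M : (1 <= k <= n)%nat ->
  (forall i, (n - k < i <= n)%nat -> (Z.of_nat i | M)) -> (Z.of_nat (k * 'C(n, k)) | M).
Proof.
  revert n. induction k as [|k IH]; intros n Hk HM; [lia|].
  destruct (Nat.eq_dec k 0) as [->|Hk0].
  { rewrite bin1, Nat.mul_1_l. apply HM. lia. }
  destruct n as [|n]; [lia|].
  assert (Hpos := bin_gt0 n k). assert (HposS := bin_gt0 (S n) k).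
  apply (divide_of_reciprocal_diff (Z.of_nat (k * 'C(n, k))) (Z.of_nat (k * 'C(S n, k)))).
  - lia.
  - lia.
  - apply binomial_reciprocal_diff. lia.
  - apply IH; [lia | intros i Hi; apply HM; lia].
  - apply IH; [lia | intros i Hi; apply HM; lia].
Qed.

Lemma pow2_le_binomial_mid m : (2 ^ m <= 'C(2 * m + 1, m + 1))%nat.
Proof.
  induction m as [|m IH]; [reflexivity|].
  replace (2 * S m + 1)%nat with (S (S (2 * m + 1))) by lia.
  replace (S m + 1)%nat with (S (S m)) by lia.
  rewrite !binS.
  assert (Hsym : 'C(2 * m + 1, m) = 'C(2 * m + 1, m + 1)).
  { rewrite <- (bin_sub (n := 2 * m + 1) (m := m)) by lia. f_equal. lia. }
  rewrite Nat.pow_succ_r'. replace (S m) with (m + 1)%nat by lia. lia.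
Qed.

Lemma window_lcm_large n M : 1 <= M ->
  (forall k, 2 ^ Z.of_nat n <= k < 2 * 2 ^ Z.of_nat n -> (k | M)) ->
  2 ^ Z.of_nat (2 ^ n - 1) <= M.
Proof.
  intros HM Hdiv. set (N := (2 ^ n - 1)%nat).
  assert (H2n : Z.of_nat (2 ^ n) = 2 ^ Z.of_nat n) by apply Nat2Z.inj_pow.
  assert (Hpos : (1 <= 2 ^ n)%nat)
    by (apply Nat.pow_le_mono_r with (a := 2%nat) (b := 0%nat); lia).
  assert (Hlcm := mul_binomial_divide (N + 1) (2 * N + 1) M ltac:(lia)
                    ltac:(intros i Hi; apply Hdiv; lia)).
  apply Z.divide_pos_le in Hlcm; [|lia].
  assert (Hmid := pow2_le_binomial_mid N).
  assert (HmidZ : 2 ^ Z.of_nat N <= Z.of_nat 'C(2 * N + 1, N + 1)).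
  { rewrite <- (Nat2Z.inj_pow 2). lia. }
  lia.
Qed.

Lemma qf_size_ge_of_window_equiv n phi : qf_one_var phi ->
  (forall z, qf_set phi z <-> ex_set (window_formula n) z) -> (2 ^ n - 1 <= qf_size phi)%nat.
Proof.
  intros [Hwf _] Heq.
  destruct (qf_set_pow2_periodic phi Hwf) as [M [HM HP]].
  assert (Hdiv : forall k, 2 ^ Z.of_nat n <= k < 2 * 2 ^ Z.of_nat n -> (k | M)).
  { apply (window_divides_period n (2 ^ Z.of_nat (qf_size phi))); [lia | apply Z.pow_nonneg; lia|].
    intros z w Hz Hw Hd. rewrite <- !window_formula_set, <- !Heq. exact (HP z w Hz Hw Hd). }
  assert (Hlarge := window_lcm_large n M ltac:(lia) Hdiv).
  apply Nat2Z.inj_le, (Z.pow_le_mono_r_iff 2); lia.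
Qed.

Lemma Rpower2_half_le_pow2_pred n :
  (2 <= n)%nat -> (Rpower 2 (1 / 2 * INR n) <= INR (2 ^ n - 1))%R.
Proof.
  intros Hn.
  assert (Hpow : (2 ^ n = 2 * 2 ^ (n - 1))%nat).
  { replace n with (S (n - 1)) at 1 by lia. apply Nat.pow_succ_r'. }
  assert (Hpos : (1 <= 2 ^ (n - 1))%nat)
    by (apply Nat.pow_le_mono_r with (a := 2%nat) (b := 0%nat); lia).
  apply Rle_trans with (Rpower 2 (INR (n - 1))).
  - apply Rle_Rpower; [lra|]. rewrite minus_INR by lia.
    assert (H := le_INR 2 n Hn). cbn in H. cbn [INR]. lra.
  - rewrite Rpower_pow by lra.
    replace (2 ^ (n - 1))%R with (INR (2 ^ (n - 1))) by (rewrite pow_INR; f_equal; cbn; lra).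
    apply le_INR. lia.
Qed.

Theorem mainTheorem15 :
  exists (c : R), (0 < c)%R /\
  exists Phi : nat -> exformula,
    (forall n, ex_one_var (Phi n)) /\
    (exists (C N0 : nat), forall n, (N0 <= n)%nat -> (ex_size (Phi n) <= C * n * n)%nat) /\
    (exists N : nat, forall n, (N <= n)%nat ->
       forall phi : qf, qf_one_var phi ->
         (forall z : Z, qf_set phi z <-> ex_set (Phi n) z) ->
         (Rpower 2 (c * INR n) <= INR (qf_size phi))%R).
Proof.
  exists (1 / 2)%R. split; [lra|].
  exists window_formula. split; [exact window_formula_one_var|]. split.
  - exists 100%nat, 1%nat. exact ex_size_window_formula.
  - exists 2%nat. intros n Hn phi Hphi Heq.
    apply Rle_trans with (INR (2 ^ n - 1)); [exact (Rpower2_half_le_pow2_pred n Hn)|].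
    apply le_INR. exact (qf_size_ge_of_window_equiv n phi Hphi Heq).
Qed.
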